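(* Let $p$ be an odd prime. Then \[ Z^{+}(p)\equiv B_{2(p-1)}-B_{p-1}-\tfrac{1}{2}H_{\frac{p-1}{2}}\pmod{p} \] and \[ Z^{+}(p)\equiv\tfrac{1}{2}\left(M_{0}(p)+M_{\frac{p-1}{2}}(p)\right)\pmod{p}, \] where $M_{k}(p)=\frac{1+(-1)^{k}k!(p-k-1)!}{p}$ and $Z^{+}(p)=\sum_{k=0}^{p-1}(-1)^kM_k(p)$.
   Context: $B_m$ are the Bernoulli numbers defined by $\frac{x}{e^{x}-1}=\sum_{m\ge0}B_m\frac{x^m}{m!}$. $H_k=\sum_{j=1}^k\frac1j$. For rationals $a,b$, $a\equiv b\pmod p$ means $a-b=pc$ for a rational $c$ whose denominator is coprime to $p$. *)

From mathcomp Require Import all_boot all_order all_algebra.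
Set Implicit Arguments. Unset Strict Implicit. Unset Printing Implicit Defensive.
Import Order.TTheory GRing.Theory Num.Theory.
Local Open Scope ring_scope.

(* Bernoulli numbers B_m defined by x/(e^x-1) = sum B_m x^m/m!.
   Comparing coefficients of x^(m+1) in x = (e^x - 1) * sum B_j x^j/j!
   gives B_0 = 1 and, for m >= 1, sum_{j=0}^{m} C(m+1,j) B_j = 0, i.e.
   B_m = - 1/(m+1) * sum_{j<m} C(m+1,j) B_j.  (B_1 = -1/2.) *)
Fixpoint bern_list (n : nat) : seq rat :=
  match n with
  | 0%N => [:: 1]
  | n'.+1 =>
      let s := bern_list n' in
      rcons s (- (n'.+2%:R)^-1 *
                 \sum_(j < n'.+1) ('C(n'.+2, j))%:R * nth 0 s j)
  end.

Definition bernoulli (m : nat) : rat := nth 0 (bern_list m) m.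

Definition harmonic (k : nat) : rat := \sum_(1 <= j < k.+1) (j%:R)^-1.

Definition rat_congr (p : nat) (a b : rat) : Prop :=
  exists c : rat, a - b = p%:R * c /\ coprime p `|denq c|%N.

Definition Mk (p k : nat) : rat :=
  (1 + (-1) ^+ k * (k`!)%:R * ((p - k - 1)`!)%:R) / p%:R.

Definition Zplus (p : nat) : rat := \sum_(k < p) (-1) ^+ k * Mk p k.

From mathcomp Require Import all_boot all_order all_algebra.
From mathcomp Require Import ring zify.
Import Order.TTheory GRing.Theory Num.Theory.
Local Open Scope ring_scope.
Set Implicit Arguments. Unset Strict Implicit.

(* Let W = ((p-1)! + 1)/p be the Wilson quotient.  Writing
   (p-1)! = (p-1)(p-2)...(p-k) * (p-k-1)!  and expanding the product to first
   order in p, (p-1)...(p-k) = (-1)^k k! (1 - p H_k) mod p^2, one finds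
   M_k(p) = W - H_k mod p for every k < p.  The alternating sum of the H_k for
   k < p is H_((p-1)/2)/2, so Z^+(p) = W - H_((p-1)/2)/2 mod p; with M_0 = W this
   is the second congruence.  The first one is then Glaisher's congruence
   W = B_(2(p-1)) - B_(p-1) mod p.  By Lerch's formula W = sum_a q_a mod p, with
   the Fermat quotients q_a = (a^(p-1) - 1)/p, and for the power sums
   S_m = sum_(a<p) a^m we have p sum_a q_a = S_(p-1) - (p-1) and
   S_(2(p-1)) - 2 S_(p-1) + (p-1) = p^2 sum_a q_a^2.  Faulhaber's formula
   gives S_m = p B_m mod p^2 for even m when p >= 5; p = 3 is checked directly. *)

(** * Bernoulli numbers and Faulhaber's formula *)

Lemma size_bern_list n : size (bern_list n) = n.+1.
Proof. by elim: n => //= n IH; rewrite size_rcons IH. Qed.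

Lemma nth_bern_list n j : (j <= n)%N -> nth 0 (bern_list n) j = bernoulli j.
Proof.
elim: n => [|n IH]; first by rewrite leqn0 => /eqP ->.
rewrite leq_eqVlt => /orP [/eqP -> //| lt_jn].
by rewrite /= nth_rcons size_bern_list lt_jn IH.
Qed.

Lemma bernoulliS m :
  bernoulli m.+1 = - (m.+2%:R)^-1 * \sum_(j < m.+1) 'C(m.+2, j)%:R * bernoulli j.
Proof.
rewrite {1}/bernoulli /= nth_rcons size_bern_list ltnn eqxx.
by congr (_ * _); apply: eq_bigr => j _; rewrite nth_bern_list // -ltnS.
Qed.

Lemma sum_bin_bernoulli n :
  \sum_(j < n.+1) 'C(n, j)%:R * bernoulli j = bernoulli n + (n == 1)%:R.
Proof.
case: n => [|[|m]]; first by rewrite big_ord1 mul1r addr0.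
  by rewrite !big_ord_recr big_ord0 /= add0r addrC /bernoulli /= !big_ord1.
rewrite big_ord_recr /= binn mul1r addr0 [X in X + _]big_ord_recr /= bernoulliS binSn.
have m2_neq0 : (m.+2%:R : rat) != 0 by rewrite pnatr_eq0.
by rewrite mulNr mulrN mulrA mulfV // mul1r addrN add0r.
Qed.

Lemma mul_bin_subC m i j : (i <= m)%N -> (j <= m)%N ->
  ('C(m, j) * 'C(m - j, i) = 'C(m, i) * 'C(m - i, j))%N.
Proof.
move=> le_im le_jm; have [le_ijm | lt_mij] := leqP (i + j) m; last first.
  by rewrite (@bin_small (m - j) i) ?(@bin_small (m - i) j) ?muln0 //; lia.
apply/eqP; rewrite -(@eqn_pmul2r (i`! * j`! * (m - i - j)`!)); last first.
  by rewrite !muln_gt0 !fact_gt0.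
have fj := bin_fact le_jm; have fi := bin_fact le_im.
have fji : ('C(m - j, i) * (i`! * (m - i - j)`!) = (m - j)`!)%N.
  by rewrite -subnDA addnC subnDA; apply: bin_fact; lia.
have fij : ('C(m - i, j) * (j`! * (m - i - j)`!) = (m - i)`!)%N.
  by apply: bin_fact; lia.
apply/eqP; transitivity ('C(m, j) * (j`! * ('C(m - j, i) * (i`! * (m - i - j)`!))))%N.
  by ring.
by rewrite fji fj -fi -fij; ring.
Qed.

Lemma sum_bin_widen n m (F : nat -> rat) : (n <= m)%N ->
  \sum_(i < n.+1) 'C(n, i)%:R * F i = \sum_(i < m.+1) 'C(n, i)%:R * F i.
Proof.
move=> le_nm; rewrite (big_ord_widen m.+1 (fun i => 'C(n, i)%:R * F i)) // big_mkcond /=.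
apply: eq_bigr => i _; case: ifP => // /negbT; rewrite -leqNgt.
by move/bin_small ->; rewrite mul0r.
Qed.

Definition bernpoly m (x : rat) :=
  \sum_(j < m.+1) 'C(m, j)%:R * bernoulli j * x ^+ (m - j).

Lemma bernpoly_rev m x :
  bernpoly m x = \sum_(i < m.+1) 'C(m, i)%:R * bernoulli (m - i) * x ^+ i.
Proof.
rewrite /bernpoly (reindex_inj rev_ord_inj) /=; apply: eq_bigr => i _.
by rewrite subSS subKn ?bin_sub // -ltnS.
Qed.

Lemma bernpolyD1_expand m x : bernpoly m (x + 1) =
  \sum_(i < m.+1) 'C(m, i)%:R * x ^+ i *
    \sum_(j < (m - i).+1) 'C(m - i, j)%:R * bernoulli j.
Proof.
have binom k : (k <= m)%N -> (x + 1) ^+ k = \sum_(i < m.+1) 'C(k, i)%:R * x ^+ i.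
  move=> le_km; rewrite -(sum_bin_widen (fun i => x ^+ i) le_km) exprD1n.
  by apply: eq_bigr => i _; rewrite mulr_natl.
rewrite /bernpoly; under eq_bigr => j _ do rewrite binom ?leq_subr // mulr_sumr.
rewrite exchange_big /=; apply: eq_bigr => i _.
rewrite (sum_bin_widen bernoulli (leq_subr i m)) mulr_sumr; apply: eq_bigr => j _.
have /(congr1 (GRing.natmul (1 : rat))) :=
  mul_bin_subC (ltnSE (ltn_ord i)) (ltnSE (ltn_ord j)).
by rewrite !natrM mulrACA => ->; ring.
Qed.

Lemma bernpolyD1 m x : bernpoly m (x + 1) = bernpoly m x + m%:R * x ^+ m.-1.
Proof.
rewrite bernpolyD1_expand bernpoly_rev.
under eq_bigr do rewrite sum_bin_bernoulli mulrDr.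
rewrite big_split /=; congr (_ + _); first by apply: eq_bigr => i _; ring.
case: m => [|m]; first by rewrite big_ord1 mulr0 mul0r.
rewrite !big_ord_recr /= subnn subSnn binSn mulr1 mulr0 addr0 big1 ?add0r; first by ring.
move=> i _; rewrite (_ : (m.+1 - i == 1)%N = false) ?mulr0 //.
by apply/eqP; have := ltn_ord i; lia.
Qed.

Definition power_sum m n := \sum_(a < n) (a%:R : rat) ^+ m.

Lemma power_sum_bernpoly m n :
  m.+1%:R * power_sum m n = bernpoly m.+1 n%:R - bernoulli m.+1.
Proof.
have bernpoly0 : bernpoly m.+1 0 = bernoulli m.+1.
  rewrite /bernpoly big_ord_recr /= subnn binn mul1r mulr1 big1 ?add0r // => i _.
  by rewrite expr0n subn_eq0 leqNgt ltn_ord mulr0.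
elim: n => [|n IH]; first by rewrite /power_sum big_ord0 mulr0 bernpoly0 subrr.
by rewrite /power_sum big_ord_recr /= mulrDr IH (mulrSr 1 n) bernpolyD1; ring.
Qed.

Lemma faulhaber m n : power_sum m n =
  \sum_(j < m.+1) 'C(m, j)%:R * bernoulli j * n%:R ^+ (m.+1 - j) / (m.+1 - j)%:R.
Proof.
have m1_neq0 : (m.+1%:R : rat) != 0 by rewrite pnatr_eq0.
apply: (mulfI m1_neq0); rewrite power_sum_bernpoly /bernpoly big_ord_recr /=.
rewrite subnn binn mul1r mulr1 addrK mulr_sumr; apply: eq_bigr => j _.
have mj_neq0 : ((m.+1 - j)%:R : rat) != 0 by rewrite pnatr_eq0 subn_eq0 -ltnNge.
have /(congr1 (GRing.natmul (1 : rat))) := mul_bin_down m.+1 j.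
by rewrite !natrM /= !mulrA => ->; field.
Qed.

Lemma harmonic0 : harmonic 0 = 0.
Proof. by rewrite /harmonic big_geq. Qed.

Lemma harmonicS k : harmonic k.+1 = harmonic k + k.+1%:R^-1.
Proof. by rewrite /harmonic big_nat_recr. Qed.

Lemma sum_sign_double n : \sum_(k < n.*2.+1) (-1 : rat) ^+ k = 1.
Proof.
elim: n => [|n IH]; first by rewrite big_ord1.
have sign_double : (-1 : rat) ^+ n.*2 = 1 by rewrite -signr_odd odd_double.
by rewrite doubleS 2!big_ord_recr /= IH !exprS sign_double; ring.
Qed.

Lemma sum_sign_harmonic_double n :
  \sum_(k < n.*2.+1) (-1 : rat) ^+ k * harmonic k = 2%:R^-1 * harmonic n.
Proof.
elim: n => [|n IH]; first by rewrite big_ord1 !harmonic0 mulr0.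
have sign_double : (-1 : rat) ^+ n.*2 = 1 by rewrite -signr_odd odd_double.
rewrite doubleS 2!big_ord_recr /= IH !exprS sign_double !harmonicS.
rewrite (_ : n.*2.+2%:R = 2%:R * n.+1%:R :> rat); last by rewrite -natrM mul2n.
by field; rewrite !nat1r !pnatr_eq0.
Qed.

Lemma odd_double_halfS n : odd n -> n = n./2.*2.+1.
Proof. by move=> n_odd; rewrite -[n in LHS]odd_double_half n_odd add1n. Qed.

Lemma lin_leq_expn b l : (0 < b)%N -> (1 + (b - 1) * l <= b ^ l)%N.
Proof.
move=> b_gt0; elim: l => [|l IH]; first by rewrite muln0.
have : (1 <= b ^ l)%N by rewrite expn_gt0 b_gt0.
by rewrite expnS; nia.
Qed.

(** * p-integral rationals *)

Section PIntegral.

Variable p : nat.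
Hypothesis p_prime : prime p.

Local Notation P := (p%:R : rat).

Definition pint (x : rat) : Prop :=
  exists (n : int) (d : nat), coprime p d /\ x = n%:~R / d%:R.

Definition pdvd (e : nat) (x : rat) : Prop := pint (x / P ^+ e).

Lemma P_neq0 : P != 0.
Proof. by rewrite pnatr_eq0 -lt0n prime_gt0. Qed.

Lemma Pexp_neq0 e : P ^+ e != 0.
Proof. by rewrite expf_neq0 // P_neq0. Qed.

Lemma coprime_natr_neq0 d : coprime p d -> (d%:R : rat) != 0.
Proof.
rewrite pnatr_eq0; apply: contraTneq => ->.
by rewrite /coprime gcdn0 neq_ltn prime_gt1 ?orbT.
Qed.

Lemma pint_nat n : pint n%:R.
Proof. by exists n, 1%N; rewrite coprimen1 divr1 pmulrn. Qed.

Lemma pint_invn d : coprime p d -> pint d%:R^-1.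
Proof. by move=> cd; exists 1, d; rewrite mul1r. Qed.

Lemma pintM x y : pint x -> pint y -> pint (x * y).
Proof.
move=> [n1 [d1 [c1 ->]]] [n2 [d2 [c2 ->]]]; exists (n1 * n2), (d1 * d2)%N.
by rewrite coprimeMr c1 c2 intrM natrM invfM; split => //; ring.
Qed.

Lemma pintN x : pint x -> pint (- x).
Proof. by move=> [n [d [cd ->]]]; exists (- n), d; rewrite mulrNz mulNr. Qed.

Lemma pintD x y : pint x -> pint y -> pint (x + y).
Proof.
move=> [n1 [d1 [c1 ->]]] [n2 [d2 [c2 ->]]].
exists (n1 * d2%:Z + n2 * d1%:Z), (d1 * d2)%N; split; first by rewrite coprimeMr c1 c2.
by rewrite intrD !intrM natrM -!pmulrn; field; rewrite !coprime_natr_neq0.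
Qed.

Lemma pintB x y : pint x -> pint y -> pint (x - y).
Proof. by move=> px py; apply: pintD px (pintN py). Qed.

Lemma pintX x n : pint x -> pint (x ^+ n).
Proof.
move=> px; elim: n => [|n IH]; first exact: (pint_nat 1).
by rewrite exprS; apply: pintM.
Qed.

Lemma pint_sign n : pint ((-1) ^+ n).
Proof. exact: pintX (pintN (pint_nat 1)). Qed.

Lemma pint_sum I (r : seq I) (F : I -> rat) :
  (forall i, pint (F i)) -> pint (\sum_(i <- r) F i).
Proof.
by move=> pF; elim/big_rec: _ => [|i x _ px]; [apply: (pint_nat 0) | apply: pintD].
Qed.

#[local] Hint Resolve pintD pintB pintN pintM pintX pint_nat pint_sign : pint.

Lemma pdvd_exp0 x : pdvd 0 x <-> pint x.
Proof. by rewrite /pdvd expr0 divr1. Qed.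

Lemma pdvd1_rat_congr a b : pdvd 1 (a - b) -> rat_congr p a b.
Proof.
rewrite /pdvd expr1; set x := (a - b) / P => -[n [d [cd ex]]].
exists x; split; first by rewrite mulrC divfK ?P_neq0.
suff dvd_den : (`|denq x| %| d)%N by apply: coprime_dvdr dvd_den cd.
have num_den : numq x * d%:Z = n * denq x.
  apply/eqP; rewrite -(eqr_int rat) !intrM numqE ex pmulrn; apply/eqP.
  by field; rewrite coprime_natr_neq0.
have : (`|denq x| %| `|numq x| * d)%N.
  by rewrite -[d]/(`|d%:Z|%N) -abszM num_den abszM dvdn_mull.
by rewrite Gauss_dvdr // coprime_sym coprime_num_den.
Qed.

Lemma pdvd_zero e : pdvd e 0.
Proof. by rewrite /pdvd mul0r; apply: (pint_nat 0). Qed.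

Lemma pdvdD e x y : pdvd e x -> pdvd e y -> pdvd e (x + y).
Proof. by rewrite /pdvd mulrDl; apply: pintD. Qed.

Lemma pdvdN e x : pdvd e x -> pdvd e (- x).
Proof. by rewrite /pdvd mulNr; apply: pintN. Qed.

Lemma pdvdB e x y : pdvd e x -> pdvd e y -> pdvd e (x - y).
Proof. by move=> px py; apply: pdvdD px (pdvdN py). Qed.

Lemma pdvdMl e c x : pint c -> pdvd e x -> pdvd e (c * x).
Proof. by rewrite /pdvd -mulrA; apply: pintM. Qed.

Lemma pdvdMr e c x : pint c -> pdvd e x -> pdvd e (x * c).
Proof. by rewrite mulrC; apply: pdvdMl. Qed.

Lemma pdvd_sum e I (r : seq I) (F : I -> rat) :
  (forall i, pdvd e (F i)) -> pdvd e (\sum_(i <- r) F i).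
Proof. by rewrite /pdvd mulr_suml => pF; apply: pint_sum. Qed.

Lemma pdvd_Pexp e x : pint x -> pdvd e (P ^+ e * x).
Proof. by rewrite /pdvd mulrC mulKf ?Pexp_neq0. Qed.

Lemma pdvd_PM e x : pdvd e.+1 (P * x) <-> pdvd e x.
Proof. by rewrite /pdvd exprS invfM mulrACA mulfV ?P_neq0 // mul1r. Qed.

Lemma pdvdS e x : pdvd e.+1 x -> pdvd e x.
Proof.
rewrite /pdvd (_ : x / P ^+ e = P * (x / P ^+ e.+1)); first exact: pintM (pint_nat p).
by rewrite exprS; field; rewrite P_neq0 Pexp_neq0.
Qed.

Lemma pdvd_pint e x : pdvd e x -> pint x.
Proof. by elim: e => [/pdvd_exp0 | e IH /pdvdS /IH]. Qed.

Lemma Pexp_divS_pdvd k e : (logn p k.+1 + e <= k)%N -> pdvd e (P ^+ k / k.+1%:R).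
Proof.
have [c cc ec] := pfactor_coprime p_prime (ltn0Sn k); set l := logn p k.+1 in ec *.
move=> le_k; rewrite /pdvd ec natrM natrX.
have -> : P ^+ k = P ^+ (k - l - e) * P ^+ l * P ^+ e.
  by rewrite -!exprD; congr (_ ^+ _); lia.
rewrite (_ : _ / _ / _ = P ^+ (k - l - e) * c%:R^-1); last first.
  by field; rewrite coprime_natr_neq0 ?Pexp_neq0.
by apply: pintM; [apply: pintX; apply: pint_nat | apply: pint_invn].
Qed.

Lemma logn_lin_bound k : ((p - 1) * logn p k.+1 <= k)%N.
Proof.
have := lin_leq_expn (logn p k.+1) (prime_gt0 p_prime).
by have := dvdn_leq (ltn0Sn k) (pfactor_dvdnn p k.+1); lia.
Qed.

Lemma prod_1addP_pdvd2 I (r : seq I) (F : I -> rat) : (forall i, pint (F i)) ->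
  pdvd 2 (\prod_(i <- r) (1 + P * F i) - (1 + P * \sum_(i <- r) F i)).
Proof.
move=> pF; elim: r => [|i r IH].
  by rewrite !big_nil mulr0 addr0 subrr; apply: pdvd_zero.
rewrite !big_cons; set Pr := \prod_(j <- r) _; set S := \sum_(j <- r) _.
have pS : pint S by apply: pint_sum.
rewrite (_ : _ - _ = (1 + P * F i) * (Pr - (1 + P * S)) + P ^+ 2 * (F i * S)).
  by apply: pdvdD; [apply: pdvdMl | apply: pdvd_Pexp]; auto using (pint_nat 1) with pint.
by ring.
Qed.

(** * Power sums modulo p^2 *)

Section OddPrime.

Hypothesis p_odd : odd p.

Lemma p_ge3 : (3 <= p)%N.
Proof. by case: p p_odd (prime_gt1 p_prime) => [|[|[|]]]. Qed.

Lemma pint_inv2 : pint 2%:R^-1.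
Proof. by apply: pint_invn; rewrite prime_coprime // gtnNdvd //; have := p_ge3; lia. Qed.

Lemma Pexp_divS_pdvd1 k : (1 <= k)%N -> pdvd 1 (P ^+ k / k.+1%:R).
Proof.
move=> k_ge1; apply: Pexp_divS_pdvd.
by have := logn_lin_bound k; have := p_ge3; nia.
Qed.

(* For p = 3 this fails already at k = 2. *)
Lemma Pexp_divS_pdvd2 k : (5 <= p)%N -> (2 <= k)%N -> pdvd 2 (P ^+ k / k.+1%:R).
Proof. by move=> p_ge5 k_ge2; apply: Pexp_divS_pdvd; have := logn_lin_bound k; nia. Qed.

Lemma power_sub_Pbernoulli m : power_sum m p - P * bernoulli m =
  \sum_(i < m) 'C(m, i)%:R * (P * bernoulli i) * (P ^+ (m - i) / (m - i).+1%:R).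
Proof.
rewrite faulhaber big_ord_recr /= subSnn binn expr1 divr1 mul1r [_ * P]mulrC addrK.
by apply: eq_bigr => i _; rewrite subSn 1?ltnW // exprS; ring.
Qed.

Lemma pint_power_sum m : pint (power_sum m p).
Proof. by apply: pint_sum => a; auto with pint. Qed.

Lemma pint_Pbernoulli m : pint (P * bernoulli m).
Proof.
elim/ltn_ind: m => m IH; rewrite -[P * _](subKr (power_sum m p)) power_sub_Pbernoulli.
apply: pintB (pint_power_sum m) (pint_sum _ _) => i.
apply: pintM; first by apply: pintM; [apply: pint_nat | apply: IH].
by apply: (@pdvd_pint 1); apply: Pexp_divS_pdvd1; rewrite subn_gt0.
Qed.

Lemma power_sub_Pbernoulli_pdvd1 m : pdvd 1 (power_sum m p - P * bernoulli m).
Proof.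
rewrite power_sub_Pbernoulli; apply: pdvd_sum => i.
apply: pdvdMl; first by apply: pintM; [apply: pint_nat | apply: pint_Pbernoulli].
by apply: Pexp_divS_pdvd1; rewrite subn_gt0.
Qed.

Lemma power_sub_PbernoulliS_pdvd2 m : (5 <= p)%N ->
  pdvd 2 (power_sum m.+1 p - P * bernoulli m.+1 -
          m.+1%:R / 2%:R * P * (P * bernoulli m)).
Proof.
move=> p_ge5; rewrite power_sub_Pbernoulli big_ord_recr /= subSnn binSn expr1.
rewrite [X in _ + X - _](_ : _ = m.+1%:R / 2%:R * P * (P * bernoulli m)) ?addrK.
  apply: pdvd_sum => i.
  apply: pdvdMl; first by apply: pintM; [apply: pint_nat | apply: pint_Pbernoulli].
  by apply: Pexp_divS_pdvd2 => //; have := ltn_ord i; lia.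
by ring.
Qed.

Lemma power_sum_drop0 m : (0 < m)%N ->
  power_sum m p = \sum_(a < p.-1) a.+1%:R ^+ m.
Proof.
move=> m_gt0; rewrite /power_sum -(prednK (prime_gt0 p_prime)) big_ord_recl.
by rewrite expr0n gtn_eqF ?add0r.
Qed.

Lemma power_sum_odd_pdvd1 m : odd m -> pdvd 1 (power_sum m p).
Proof.
move=> m_odd; have m_gt0 : (0 < m)%N by case: m m_odd.
have pair_pdvd1 a : pint a -> pdvd 1 (a ^+ m + (P - a) ^+ m).
  move=> pa; have -> : a ^+ m + (P - a) ^+ m = (P - a) ^+ m - (- a) ^+ m.
    by rewrite exprNn -signr_odd m_odd expr1 mulN1r opprK addrC.
  rewrite subrXX opprK subrK; apply/pdvd_PM/pdvd_exp0/pint_sum => j.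
  by auto with pint.
have reflect_sum : power_sum m p = \sum_(a < p.-1) (P - a.+1%:R) ^+ m.
  rewrite power_sum_drop0 // (reindex_inj rev_ord_inj) /=; apply: eq_bigr => a _.
  by rewrite -natrB -?subSn ?prednK ?prime_gt0 //=; have := ltn_ord a; lia.
rewrite (_ : power_sum m p = 2%:R^-1 * (power_sum m p + power_sum m p)); last by field.
apply: pdvdMl; first exact: pint_inv2.
rewrite {1}power_sum_drop0 // {1}reflect_sum -big_split /=.
by apply: pdvd_sum => a; apply: pair_pdvd1; apply: pint_nat.
Qed.

Lemma power_sub_Pbernoulli_even_pdvd2 m : (5 <= p)%N -> odd m ->
  pdvd 2 (power_sum m.+1 p - P * bernoulli m.+1).
Proof.
move=> p_ge5 m_odd; have PB_pdvd1 : pdvd 1 (P * bernoulli m).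
  rewrite -[P * _](subKr (power_sum m p)).
  exact: pdvdB (power_sum_odd_pdvd1 m_odd) (power_sub_Pbernoulli_pdvd1 m).
rewrite -[X in pdvd 2 X](subrK (m.+1%:R / 2%:R * P * (P * bernoulli m))).
apply: pdvdD; first exact: power_sub_PbernoulliS_pdvd2.
rewrite -mulrA; apply: pdvdMl; last exact/pdvd_PM.
by apply: pintM; [apply: pint_nat | apply: pint_inv2].
Qed.

(** * Wilson quotients and the numbers M_k(p) *)

Lemma pint_harmonic k : (k < p)%N -> pint (harmonic k).
Proof.
elim: k => [|k IH] lt_kp; first by rewrite harmonic0; apply: (pint_nat 0).
rewrite harmonicS; apply: pintD; first exact/IH/ltnW.
by apply: pint_invn; rewrite prime_coprime // gtnNdvd.
Qed.

Lemma prod_Psub_pdvd2 k : (k < p)%N ->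
  pdvd 2 (\prod_(i < k) (P - i.+1%:R) - (-1) ^+ k * k`!%:R * (1 - P * harmonic k)).
Proof.
elim: k => [|k IH] lt_kp.
  by rewrite big_ord0 harmonic0 mulr0 subr0 !mulr1 subrr; apply: pdvd_zero.
rewrite big_ord_recr /= harmonicS factS natrM exprS mulN1r mulNr -mulrCA.
set A := \prod_(i < k) _; set c := (-1) ^+ k * k`!%:R; set H := harmonic k.
have pH : pint H by apply/pint_harmonic/ltnW.
have pc : pint c by rewrite /c; auto with pint.
rewrite (_ : _ - _ = (A - c * (1 - P * H)) * (P - k.+1%:R) - P ^+ 2 * (c * H)).
  apply: pdvdB; last by apply: pdvd_Pexp; auto with pint.
  by apply: pdvdMr; [auto with pint | apply/IH/ltnW].
by field; rewrite nat1r pnatr_eq0.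
Qed.

Definition wilson_quo := (p.-1)`!.+1%:R / P.

Lemma pint_wilson_quo : pint wilson_quo.
Proof.
rewrite /wilson_quo; have /dvdnP [c ->] : (p %| (p.-1)`!.+1)%N.
  by rewrite -Wilson ?prime_gt1.
by rewrite natrM mulfK ?P_neq0 //; apply: pint_nat.
Qed.

Lemma Mk_pdvd1 k : (k < p)%N -> pdvd 1 (Mk p k - (wilson_quo - harmonic k)).
Proof.
move=> lt_kp; rewrite /Mk (_ : (p - k - 1 = p.-1 - k)%N); last by lia.
set c := (-1) ^+ k * k`!%:R; set f := (p.-1 - k)`!%:R; set H := harmonic k.
set W := wilson_quo; set A := \prod_(i < k) (P - i.+1%:R).
have pW : pint W by apply: pint_wilson_quo.
have pH : pint H by apply: pint_harmonic.
have pc : pint c by rewrite /c; auto with pint.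
have pf : pint f by apply: pint_nat.
have wilson_fact : P * W = 1 + A * f.
  rewrite /W /wilson_quo mulrC divfK ?P_neq0 // -addn1 natrD addrC; congr (_ + _).
  rewrite /A /f -(ffact_fact (_ : k <= p.-1)%N); last by lia.
  rewrite natrM ffact_prod natr_prod; congr (_ * _); apply: eq_bigr => i _.
  by rewrite -natrB; [congr _%:R | ]; have := ltn_ord i; lia.
have E := prod_Psub_pdvd2 lt_kp; rewrite -/A -/c -/H in E.
(* With E divisible by p^2, 1 + c f = p (W - H) + p H (1 + c f) - E f, and
   1 + c f is itself divisible by p. *)
have X_pdvd1 : pdvd 1 (1 + c * f).
  rewrite (_ : 1 + c * f = P * (W + c * f * H) - (A - c * (1 - P * H)) * f).
    by apply: pdvdB; [apply/pdvd_PM/pdvd_exp0 | apply/pdvdMr/pdvdS]; auto with pint.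
  by rewrite mulrDr wilson_fact; ring.
apply/pdvd_PM; rewrite (_ : _ * _ = H * (1 + c * f) * P - (A - c * (1 - P * H)) * f).
  by apply: pdvdB; [rewrite mulrC; apply/pdvd_PM/pdvdMl | apply: pdvdMr]; auto with pint.
rewrite mulrBr -mulrA [P * (_ / P)]mulrC divfK ?P_neq0 // mulrBr wilson_fact; ring.
Qed.

Lemma Zplus_pdvd1 : pdvd 1 (Zplus p - (wilson_quo - 2%:R^-1 * harmonic p./2)).
Proof.
have -> : wilson_quo - 2%:R^-1 * harmonic p./2 =
    \sum_(k < p) (-1) ^+ k * (wilson_quo - harmonic k).
  under eq_bigr do rewrite mulrBr.
  rewrite sumrB -mulr_suml [in RHS](odd_double_halfS p_odd).
  by rewrite sum_sign_double sum_sign_harmonic_double mul1r.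
rewrite /Zplus -sumrB; apply: pdvd_sum => k; rewrite -mulrBr.
by apply: pdvdMl; [apply: pint_sign | apply: Mk_pdvd1].
Qed.

(** * Lerch's formula and Glaisher's congruence *)

Definition fermat_quo (a : nat) := (a%:R ^+ p.-1 - 1) / P.

Lemma pint_fermat_quo a : (0 < a < p)%N -> pint (fermat_quo a).
Proof.
case/andP=> a_gt0 lt_ap; have cpa : coprime p a by rewrite prime_coprime // gtnNdvd.
have ap1_ge1 : (1 <= a ^ p.-1)%N by rewrite expn_gt0 a_gt0.
have : (p %| a * (a ^ p.-1 - 1))%N.
  rewrite mulnBr muln1 -expnS prednK ?prime_gt0 // -eqn_mod_dvd ?fermat_little //.
  by rewrite -{1}(expn1 a) leq_pexp2l // prime_gt0.
rewrite Gauss_dvdr // => /dvdnP [c ec].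
rewrite /fermat_quo -natrX -(natrB _ ap1_ge1) ec natrM mulfK ?P_neq0 //.
exact: pint_nat.
Qed.

Lemma pint_fermat_quoS (a : 'I_p.-1) : pint (fermat_quo a.+1).
Proof. by apply: pint_fermat_quo; rewrite ltn0Sn -ltn_predRL ltn_ord. Qed.

(* Both sides of ((p-1)!)^(p-1) = prod_a a^(p-1) are expanded to first order in
   p: the left one through (p-1)! = p W - 1, the right one through
   a^(p-1) = 1 + p q_a. *)
Lemma lerch : pdvd 1 (\sum_(a < p.-1) fermat_quo a.+1 - wilson_quo).
Proof.
set h := p./2; set W := wilson_quo; set y := P * W ^+ 2 - 2%:R * W.
have P_eq : P = 2%:R * h%:R + 1.
  by rewrite [in LHS](odd_double_halfS p_odd) -natr1 -mul2n natrM.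
have pW : pint W by apply: pint_wilson_quo.
have py : pint y by rewrite /y; auto with pint.
have fact_expE : \prod_(a < p.-1) (1 + P * fermat_quo a.+1) = (p.-1)`!%:R ^+ p.-1.
  rewrite fact_prod natr_prod big_add1 /= big_mkord -prodrXl; apply: eq_bigr => a _.
  by rewrite /fermat_quo mulrC divfK ?P_neq0 // addrC subrK.
have fact_sqE : (p.-1)`!%:R ^+ 2 = 1 + P * y.
  rewrite (_ : (p.-1)`!%:R = P * W - 1); first by rewrite /y; ring.
  by rewrite /W /wilson_quo mulrC divfK ?P_neq0 // -natr1 addrK.
have fact_exp_hE : (p.-1)`!%:R ^+ p.-1 = \prod_(i < h) (1 + P * y).
  have pred_p : p.-1 = h.*2 by rewrite [in LHS](odd_double_halfS p_odd).
  by rewrite prodr_const card_ord -fact_sqE -exprM mul2n -pred_p.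
have Eq := @prod_1addP_pdvd2 _ (index_enum 'I_p.-1) _ pint_fermat_quoS.
have Ey := @prod_1addP_pdvd2 _ (index_enum 'I_h) (fun _ => y) (fun _ => py).
have sum_y : \sum_(i < h) y = h%:R * y by rewrite sumr_const card_ord mulr_natl.
rewrite fact_expE fact_exp_hE in Eq; rewrite sum_y in Ey.
set X := \prod_(i < h) _ in Eq Ey; set S := \sum_(a < p.-1) _ in Eq *.
apply/pdvd_PM; rewrite (_ : P * (S - W) = X - (1 + P * (h%:R * y)) -
    (X - (1 + P * S)) + P ^+ 2 * (h%:R * W ^+ 2 - W)).
  by apply: pdvdD; [apply: pdvdB | apply: pdvd_Pexp]; auto with pint.
by rewrite /y P_eq; ring.
Qed.

Lemma P_sub1 : P - 1 = \sum_(a < p.-1) 1.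
Proof. by rewrite sumr_const card_ord -(prednK (prime_gt0 p_prime)) mulrSr addrK. Qed.

Lemma Psum_fermat_quo :
  P * \sum_(a < p.-1) fermat_quo a.+1 = power_sum p.-1 p - (P - 1).
Proof.
rewrite power_sum_drop0 ?P_sub1 -?sumrB ?mulr_sumr; last by have := p_ge3; lia.
by apply: eq_bigr => a _; rewrite /fermat_quo mulrC divfK ?P_neq0.
Qed.

Lemma fermat_quo_sq_pdvd2 :
  pdvd 2 (power_sum (2 * p.-1) p - 2%:R * power_sum p.-1 p + (P - 1)).
Proof.
have pred_p_gt0 : (0 < p.-1)%N by have := p_ge3; lia.
rewrite !power_sum_drop0 ?muln_gt0 ?pred_p_gt0 // P_sub1 mulr_sumr -sumrB -big_split /=.
apply: pdvd_sum => a; rewrite (_ : _ + 1 = P ^+ 2 * fermat_quo a.+1 ^+ 2).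
  exact/pdvd_Pexp/pintX/pint_fermat_quoS.
by rewrite /fermat_quo mulnC exprM; field; rewrite P_neq0.
Qed.

Lemma glaisher_ge5 : (5 <= p)%N ->
  pdvd 1 (wilson_quo - (bernoulli (2 * p.-1) - bernoulli p.-1)).
Proof.
move=> p_ge5; have p_ge3 := p_ge3.
have odd_pred2 : odd p.-2 by case: p p_odd p_ge3 => [|[|[|q]]] //=; rewrite negbK.
have odd_2pred : odd (2 * p.-1).-1.
  by rewrite (_ : (2 * p.-1).-1 = p.-2.*2.+1) /= ?odd_double //; lia.
have E1 := power_sub_Pbernoulli_even_pdvd2 p_ge5 odd_pred2.
have E2 := power_sub_Pbernoulli_even_pdvd2 p_ge5 odd_2pred.
rewrite (_ : p.-2.+1 = p.-1) in E1; last by lia.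
rewrite (_ : (2 * p.-1).-1.+1 = 2 * p.-1)%N in E2; last by lia.
rewrite -[wilson_quo](subrK (\sum_(a < p.-1) fermat_quo a.+1)) -opprB -addrA.
apply: pdvdD (pdvdN lerch) _; apply/pdvd_PM; rewrite mulrBr Psum_fermat_quo.
rewrite (_ : _ - _ = (power_sum (2 * p.-1) p - P * bernoulli (2 * p.-1)) -
   (power_sum p.-1 p - P * bernoulli p.-1) -
   (power_sum (2 * p.-1) p - 2%:R * power_sum p.-1 p + (P - 1))); last by ring.
by apply: pdvdB; [apply: pdvdB | apply: fermat_quo_sq_pdvd2].
Qed.

Lemma glaisher : pdvd 1 (wilson_quo - (bernoulli (2 * p.-1) - bernoulli p.-1)).
Proof.
have [lt_p5 | ] := ltnP p 5; last exact: glaisher_ge5.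
have p3 : p = 3 by have := p_ge3; move: p_odd lt_p5; case: p => [|[|[|[|[|]]]]].
rewrite /pdvd /pint /wilson_quo p3 /bernoulli /= !big_ord_recr !big_ord0 /=.
by exists 2, 5%N; split => //; apply/eqP; vm_compute.
Qed.

End OddPrime.

End PIntegral.

Theorem mainTheorem12 (p : nat) (hp : prime p) (hodd : odd p) :
  rat_congr p (Zplus p)
    (bernoulli (2 * (p - 1)) - bernoulli (p - 1) - 2%:R^-1 * harmonic (p - 1)./2)
  /\
  rat_congr p (Zplus p) (2%:R^-1 * (Mk p 0 + Mk p (p - 1)./2)).
Proof.
have p_half := odd_double_halfS hodd.
rewrite subn1 (_ : p.-1./2 = p./2); last by rewrite {1}p_half /= doubleK.
have Z := Zplus_pdvd1 hp hodd; have G := glaisher hp hodd.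
have M0 := Mk_pdvd1 hp hodd (prime_gt0 hp); rewrite harmonic0 subr0 in M0.
have half_lt : (p./2 < p)%N by rewrite {2}p_half ltnS -addnn leq_addr.
have Mh := Mk_pdvd1 hp hodd half_lt.
have inv2 := pint_inv2 hp hodd.
set W := wilson_quo p in Z G M0 Mh *; set H := harmonic p./2 in Z Mh *.
split; apply: pdvd1_rat_congr => //.
  rewrite (_ : _ - _ = (Zplus p - (W - 2%:R^-1 * H)) +
                       (W - (bernoulli (2 * p.-1) - bernoulli p.-1))); last by ring.
  exact: pdvdD.
rewrite (_ : _ - _ = (Zplus p - (W - 2%:R^-1 * H)) - 2%:R^-1 * (Mk p 0 - W) -
                     2%:R^-1 * (Mk p p./2 - (W - H))); last by field.
by apply: (pdvdB hp); first apply: (pdvdB hp) => //; apply: pdvdMl.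
Qed.
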